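(* Let $G$ be a connected graph with $n$ vertices. Then \[ Kf(G)\leq\frac{n-1}{n}\sum_{i=1}^n\alpha_i(G)^{-1}. \]
   Context: $G$ is a finite simple graph with vertex set $[n]$ and Laplacian matrix $\mathcal{L}_G=D-A$. For a vertex $i$, $\alpha_i(G)=\min\{\mathbf{x}^\top\mathcal{L}_G\mathbf{x} : \mathbf{x}\in\mathbb{R}^n_+,\ \sum_j x_j^2=1,\ x_i=0\}$ (the inverse Perron value of $i$); for connected $G$ this equals the smallest eigenvalue of the principal submatrix $\mathcal{L}_G(i)$ obtained by deleting row and column $i$. The resistance distance $r_{ij}(G)$ is the effective resistance between $i$ and $j$ when every edge is a unit resistor, and the Kirchhoff index is $Kf(G)=\sum_{\{i,j\}\subseteq V(G)}r_{ij}(G)$ (sum over unordered pairs). *)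

From HB Require Import structures.
From mathcomp Require Import all_boot all_order all_algebra.
From mathcomp Require Import all_classical all_reals.
Set Implicit Arguments. Unset Strict Implicit. Unset Printing Implicit Defensive.
Import Order.TTheory GRing.Theory Num.Theory.
Local Open Scope ring_scope.
Local Open Scope classical_set_scope.

Definition simple_graph (n : nat) (e : rel 'I_n) : Prop :=
  symmetric e /\ irreflexive e.

Definition connected_graph (n : nat) (e : rel 'I_n) : Prop :=
  forall i j : 'I_n, connect e i j.

Definition deg (n : nat) (e : rel 'I_n) (i : 'I_n) : nat := #|[set k | e i k]|.

Definition laplacian (R : ringType) (n : nat) (e : rel 'I_n) : 'M[R]_n :=
  \matrix_(i, j) ((i == j)%:R * (deg e i)%:R - (e i j)%:R).

Definition qform (R : ringType) (n : nat) (L : 'M[R]_n) (x : 'cV[R]_n) : R :=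
  (x^T *m L *m x) ord0 ord0.

(* inverse Perron value alpha_i(G) =
   min { x^T L x : x in R^n_+, sum_j x_j^2 = 1, x_i = 0 }
   (the minimum exists by compactness, so it equals the infimum). *)
Definition inv_perron (R : realType) (n : nat) (e : rel 'I_n) (i : 'I_n) : R :=
  inf [set t : R | exists x : 'cV[R]_n,
         [/\ (forall j, 0 <= x j ord0),
             \sum_j (x j ord0) ^+ 2 = 1,
             x i ord0 = 0 &
             t = qform (laplacian R e) x]].

(* Resistance distance (unit resistors): inject a unit current at i and
   extract it at j; the node potentials v solve L v = e_i - e_j (here as a
   row vector, L symmetric), and r_ij = v_i - v_j.  A solution is
   obtained with the partial inverse pinvmx (valid since e_i - e_j lies in
   the row space of L for connected G; the potential difference does not
   depend on the chosen solution). *)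
Definition resistance (R : realType) (n : nat) (e : rel 'I_n) (i j : 'I_n) : R :=
  let b : 'rV[R]_n := delta_mx ord0 i - delta_mx ord0 j in
  let v := b *m pinvmx (laplacian R e) in
  v ord0 i - v ord0 j.

Definition kirchhoff (R : realType) (n : nat) (e : rel 'I_n) : R :=
  \sum_(i < n) \sum_(j < n | (i < j)%N) resistance R e i j.

(* For a vertex i let w_i be the potential vanishing at i when a unit current
   enters the network at every vertex and n units leave it at i, i.e.
   w_i L = 1 - n e_i.  By the minimum principle w_i >= 0, and by superposition
   n r_ij = w_i(j) + w_j(i), so n Kf(G) = sum_i s_i where s_i is the sum of the
   entries of w_i.
   For x admissible in the definition of alpha_i, x L w_i^T is the sum of the
   entries of x, which is at least 1, so Cauchy-Schwarz for the semidefinite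
   form of L gives alpha_i >= 1/s_i > 0.  Conversely the normalised w_i is
   admissible with value s_i/|w_i|^2 <= (n-1)/s_i, since w_i has at most n-1
   non-zero entries.  Hence s_i <= (n-1)/alpha_i. *)

From HB Require Import structures.
From mathcomp Require Import all_boot all_order all_algebra.
From mathcomp Require Import all_classical all_reals.
From mathcomp Require Import ring lra zify.
Set Implicit Arguments. Unset Strict Implicit. Unset Printing Implicit Defensive.
Import Order.TTheory GRing.Theory Num.Theory.
Local Open Scope ring_scope.

Lemma sum_eq_delta (R : nzRingType) n (i : 'I_n) (F : 'I_n -> R) :
  \sum_k (k == i)%:R * F k = F i.
Proof.
rewrite (bigD1 i) //= eqxx mul1r big1 ?addr0 // => k /negbTE ->.
by rewrite mul0r.
Qed.

Lemma sum_ltn_pairs (R : nmodType) n (g : 'I_n -> 'I_n -> R) :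
  (forall i, g i i = 0) ->
  \sum_(i < n) \sum_(j < n | (i < j)%N) (g i j + g j i) =
  \sum_(i < n) \sum_(j < n) g i j.
Proof.
move=> g0; have split_row i : \sum_(j < n) g i j =
    \sum_(j < n | (i < j)%N) g i j + \sum_(j < n | (j < i)%N) g i j.
  rewrite (bigID (fun j : 'I_n => (i < j)%N)) /=; congr (_ + _).
  rewrite big_mkcond [RHS]big_mkcond /=; apply: eq_bigr => j _.
  by case: ltngtP => // /val_inj ->; rewrite g0.
under [RHS]eq_bigr do rewrite split_row.
under [LHS]eq_bigr do rewrite big_split /=.
rewrite !big_split /=; congr (_ + _).
by rewrite (exchange_big_dep xpredT).
Qed.

Lemma sum_sqr_le_sqr_sum (R : numDomainType) (I : finType) (x : I -> R) :
  (forall k, 0 <= x k) -> \sum_k x k ^+ 2 <= (\sum_k x k) ^+ 2.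
Proof.
move=> x_ge0; rewrite [leRHS]expr2 mulr_suml; apply: ler_sum => k _.
rewrite expr2 ler_wpM2l // (bigD1 k) //= lerDl.
by apply: sumr_ge0 => l _.
Qed.

Lemma sqr_sum_le_card_sum_sqr (R : realDomainType) (I : finType) (P : pred I)
    (x : I -> R) :
  (\sum_(k | P k) x k) ^+ 2 <= #|P|%:R * \sum_(k | P k) x k ^+ 2.
Proof.
set s := \sum_(k | P k) x k; set q := \sum_(k | P k) x k ^+ 2.
have sum_sqr_diff : \sum_(k | P k) \sum_(l | P l) (x k - x l) ^+ 2 =
    (#|P|%:R * q - s ^+ 2) *+ 2.
  transitivity (\sum_(k | P k) (x k ^+ 2 *+ #|P| - x k * s *+ 2 + q)).
    apply: eq_bigr => k _; under eq_bigr do rewrite sqrrB.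
    by rewrite big_split sumrB /= sumr_const sumrMnl -mulr_sumr.
  rewrite big_split sumrB /= !sumrMnl sumr_const -mulr_suml -/q -/s.
  by rewrite -[q *+ _]mulr_natl; ring.
have : 0 <= (#|P|%:R * q - s ^+ 2) *+ 2.
  by rewrite -sum_sqr_diff; apply: sumr_ge0 => k _; apply: sumr_ge0 => l _; apply: sqr_ge0.
by rewrite mulr2n; lra.
Qed.

Definition bform (R : comNzRingType) n (L : 'M[R]_n) (x y : 'rV[R]_n) : R :=
  (x *m L *m y^T) 0 0.

Section BilinearForm.
Variables (R : comNzRingType) (n : nat) (L : 'M[R]_n).

Lemma bformE x y : bform L x y = \sum_a (x *m L) 0 a * y 0 a.
Proof. by rewrite /bform mxE; apply: eq_bigr => a _; rewrite [y^T _ _]mxE. Qed.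

Lemma qformE (x : 'cV[R]_n) : qform L x = bform L x^T x^T.
Proof. by rewrite /qform /bform trmxK. Qed.

Lemma bformDl x1 x2 y : bform L (x1 + x2) y = bform L x1 y + bform L x2 y.
Proof. by rewrite /bform !mulmxDl mxE. Qed.

Lemma bformZl a x y : bform L (a *: x) y = a * bform L x y.
Proof. by rewrite /bform -!scalemxAl mxE. Qed.

Lemma bformDr x y1 y2 : bform L x (y1 + y2) = bform L x y1 + bform L x y2.
Proof. by rewrite /bform linearD mulmxDr mxE. Qed.

Lemma bformZr a x y : bform L x (a *: y) = a * bform L x y.
Proof. by rewrite /bform linearZ -scalemxAr mxE. Qed.

Lemma bformC x y : L^T = L -> bform L x y = bform L y x.
Proof.
move=> LT; rewrite /bform -[in LHS](trmxK (x *m L *m y^T)) mxE.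
by rewrite !trmx_mul trmxK LT mulmxA.
Qed.

End BilinearForm.

Lemma bform_CauchySchwarz (R : realDomainType) n (L : 'M[R]_n) x y :
  L^T = L -> (forall z, 0 <= bform L z z) -> 0 < bform L y y ->
  bform L x y ^+ 2 <= bform L x x * bform L y y.
Proof.
move=> LT psd ypos; set s := bform L y y; set t := bform L x y.
have := psd (s *: x + (- t) *: y).
rewrite !(bformDl, bformDr, bformZl, bformZr) [bform L y x]bformC // -/s -/t.
rewrite (_ : _ + _ = s * (s * bform L x x - t ^+ 2)); last by ring.
by rewrite pmulr_rge0 // subr_ge0 mulrC.
Qed.

Section LaplacianRing.
Variables (R : comNzRingType) (n : nat) (e : rel 'I_n).
Hypothesis sym_e : symmetric e.
Local Notation L := (laplacian R e).

Lemma natr_deg a : (deg e a)%:R = \sum_b (e a b)%:R :> R.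
Proof.
rewrite /deg -sumr_const big_mkcond /=; apply: eq_bigr => b _.
have -> : (b \in [set k | e a k]%classic) = e a b by apply/idP/idP; rewrite in_setE.
by case: (e a b).
Qed.

Lemma laplacian_tr : L^T = L.
Proof.
apply/matrixP => a b; rewrite !mxE.
by case: (eqVneq a b) => [-> // | _]; rewrite !mul0r sym_e.
Qed.

Lemma mulmx_laplacian (x : 'rV[R]_n) a :
  (x *m L) 0 a = \sum_b (e a b)%:R * (x 0 a - x 0 b).
Proof.
rewrite mxE.
under eq_bigr do rewrite mxE mulrBr mulrCA [x 0 _ * _%:R]mulrC.
rewrite sumrB (sum_eq_delta a (fun k => (deg e k)%:R * x 0 k)) natr_deg mulr_suml.
under [RHS]eq_bigr do rewrite mulrBr.
by rewrite sumrB; congr (_ - _); apply: eq_bigr => b _; rewrite sym_e mulrC.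
Qed.

Lemma const_mx_laplacian : (const_mx 1 : 'rV[R]_n) *m L = 0.
Proof.
apply/rowP => a; rewrite mulmx_laplacian [RHS]mxE.
by apply: big1 => k _; rewrite !mxE subrr mulr0.
Qed.

End LaplacianRing.

Section LaplacianReal.
Variables (R : realFieldType) (n : nat) (e : rel 'I_n).
Hypothesis sym_e : symmetric e.
Local Notation L := (laplacian R e).

Lemma laplacian_bform_ge0 x : 0 <= bform L x x.
Proof.
pose T := \sum_a \sum_b (e a b)%:R * (x 0 a - x 0 b) * x 0 a.
have T_def : bform L x x = T.
  by rewrite bformE; apply: eq_bigr => a _; rewrite mulmx_laplacian // mulr_suml.
have T_swap : T = \sum_a \sum_b (e a b)%:R * (x 0 b - x 0 a) * x 0 b.
  by rewrite /T exchange_big; apply: eq_bigr => a _; apply: eq_bigr => b _; rewrite sym_e.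
have T2 : T + T = \sum_a \sum_b (e a b)%:R * (x 0 a - x 0 b) ^+ 2.
  rewrite {2}T_swap -big_split; apply: eq_bigr => a _.
  by rewrite -big_split; apply: eq_bigr => b _ /=; ring.
have : 0 <= T + T.
  rewrite T2; apply: sumr_ge0 => a _; apply: sumr_ge0 => b _.
  by rewrite mulr_ge0 ?ler0n ?sqr_ge0.
rewrite T_def; lra.
Qed.

Lemma laplacian_min_principle (w c : 'rV[R]_n) i :
  w *m L = c -> w 0 i = 0 -> (forall k, k != i -> 0 < c 0 k) ->
  forall k, 0 <= w 0 k.
Proof.
move=> wL wi c_pos k.
have [m _ m_min] := @arg_minP _ _ _ k predT (fun j => w 0 j) isT.
apply: le_trans (m_min k isT); rewrite leNgt; apply/negP => wm_neg.
have mi : m != i by apply: contraTneq wm_neg => ->; rewrite wi ltxx.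
have := c_pos m mi; rewrite -wL mulmx_laplacian // ltNge => /negP; apply.
apply: sumr_le0 => b _; rewrite mulr_ge0_le0 ?ler0n //.
by rewrite subr_le0 m_min.
Qed.

Hypothesis con_e : connected_graph e.

Lemma laplacian_kernel_const (u : 'rV[R]_n) a b :
  u *m L = 0 -> u 0 a = u 0 b.
Proof.
move=> uL.
have [m _ m_max] := @arg_maxP _ _ _ a predT (fun k => u 0 k) isT.
pose S := [pred k | u 0 k == u 0 m].
have S_step x y : e x y -> x \in S -> y \in S.
  move=> exy; rewrite !inE => /eqP ux.
  have terms_ge0 k : true -> 0 <= (e x k)%:R * (u 0 x - u 0 k).
    by move=> _; rewrite mulr_ge0 ?ler0n // subr_ge0 ux; apply: m_max.
  have := congr1 (fun v : 'rV[R]_n => v 0 x) uL.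
  rewrite mulmx_laplacian // mxE => /(psumr_eq0P terms_ge0) /(_ y isT).
  by rewrite exy mul1r => /eqP; rewrite subr_eq0 ux eq_sym.
have S_closed : closed e S.
  by move=> x y exy; apply/idP/idP; apply: S_step; rewrite // sym_e.
have Sm : m \in S by rewrite inE.
have /eqP -> := etrans (esym (closed_connect S_closed (con_e m a))) Sm.
by have /eqP -> := etrans (esym (closed_connect S_closed (con_e m b))) Sm.
Qed.

Lemma laplacian_solvable (b : 'rV[R]_n) :
  (0 < n)%N -> \sum_k b 0 k = 0 -> b *m pinvmx L *m L = b.
Proof.
move=> n_gt0 b_sum0; pose a0 := Ordinal n_gt0.
pose J : 'cV[R]_n := const_mx 1.
have LJ : L *m J = 0.
  apply: trmx_inj; rewrite trmx_mul laplacian_tr // trmx0.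
  by rewrite (_ : J^T = const_mx 1) ?const_mx_laplacian //; apply/rowP => ?; rewrite !mxE.
have bJ : b *m J = 0.
  apply/rowP => z; rewrite (ord1 z) !mxE -[RHS]b_sum0.
  by apply: eq_bigr => k _; rewrite mxE mulr1.
have kerL : (kermx L <= (const_mx 1 : 'rV[R]_n))%MS.
  apply/row_subP => k; set u := row k (kermx L).
  have uL : u *m L = 0 by rewrite /u -row_mul mulmx_ker row0.
  have -> : u = u 0 a0 *: const_mx 1.
    by apply/rowP => a; rewrite [RHS]mxE [const_mx _ _ _]mxE mulr1; apply: laplacian_kernel_const.
  exact: scalemx_sub.
have rank_L : (n - 1 <= \rank L)%N.
  by have := mxrankS kerL; rewrite mxrank_ker; have := rank_leq_row (const_mx 1 : 'rV[R]_n); lia.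
have rank_J : \rank J = 1%N.
  apply/eqP; rewrite eqn_leq rank_leq_col lt0n mxrank_eq0.
  by apply/eqP => /colP /(_ a0); rewrite !mxE => /eqP; rewrite oner_eq0.
have L_sub : (L <= kermx J)%MS by rewrite sub_kermx LJ.
have /leqifP := mxrank_leqif_sup L_sub; rewrite mxrank_ker rank_J.
case: ifP => [kerJ_sub _ | _]; last by lia.
by apply: mulmxKpV; apply: submx_trans kerJ_sub; rewrite sub_kermx bJ.
Qed.

End LaplacianReal.

Definition sink_current (R : nzRingType) n (i : 'I_n) : 'rV[R]_n :=
  \row_k (1 - n%:R * (k == i)%:R).

(* Locked, as otherwise [mxE] unfolds its entries. *)
HB.lock Definition sink_potential (R : realFieldType) n (e : rel 'I_n) (i : 'I_n) :
  'rV[R]_n :=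
  let y := sink_current R i *m pinvmx (laplacian R e) in y - y 0 i *: const_mx 1.

Lemma sink_current_sum (R : comNzRingType) n (i : 'I_n) :
  \sum_k sink_current R i 0 k = 0.
Proof.
under eq_bigr do rewrite mxE mulrC.
by rewrite sumrB sumr_const card_ord (sum_eq_delta i (fun _ => n%:R)) subrr.
Qed.

Lemma sink_currentB (R : comNzRingType) n (i j : 'I_n) :
  sink_current R j - sink_current R i = n%:R *: (delta_mx 0 i - delta_mx 0 j).
Proof. by apply/rowP => k; rewrite !mxE; ring. Qed.

Lemma sink_potential_sink (R : realFieldType) n (e : rel 'I_n) i :
  sink_potential R e i 0 i = 0.
Proof. by rewrite unlock !mxE mulr1 subrr. Qed.

Section SinkPotential.
Variables (R : realFieldType) (n : nat) (e : rel 'I_n).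
Hypotheses (sym_e : symmetric e) (con_e : connected_graph e).
Local Notation L := (laplacian R e).
Local Notation w := (sink_potential R e).

Lemma sink_potentialL i : w i *m L = sink_current R i.
Proof.
rewrite unlock mulmxBl -scalemxAl const_mx_laplacian // scaler0 subr0.
by apply: laplacian_solvable => //; [apply: leq_ltn_trans (ltn_ord i) | apply: sink_current_sum].
Qed.

Lemma sink_potential_ge0 i k : 0 <= w i 0 k.
Proof.
apply: (laplacian_min_principle sym_e (sink_potentialL i) (@sink_potential_sink R n e i)).
by move=> {}k ki; rewrite mxE (negbTE ki) mulr0 subr0 ltr01.
Qed.

Lemma bform_sink_potential i x :
  bform L x (w i) = \sum_a x 0 a - n%:R * x 0 i.
Proof.
rewrite bformC ?laplacian_tr // bformE sink_potentialL.
under eq_bigr do rewrite mxE mulrBl mul1r -mulrA mulrCA.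
by rewrite sumrB (sum_eq_delta i (fun k => n%:R * x 0 k)).
Qed.

Lemma sink_potential_sum_gt0 i : (1 < n)%N -> 0 < \sum_k w i 0 k.
Proof.
move=> n_gt1; rewrite lt_def sumr_ge0 ?andbT // => [|k _]; last exact: sink_potential_ge0.
apply: contraTneq n_gt1 => /(psumr_eq0P (fun k _ => sink_potential_ge0 i k)) w_eq0.
have /rowP/(_ i) := sink_potentialL i.
rewrite (_ : w i = 0) ?mul0mx; last by apply/rowP => k; rewrite w_eq0 ?mxE.
rewrite !mxE eqxx mulr1 => /eqP; rewrite eq_sym subr_eq0 eq_sym pnatr_eq1.
by move=> /eqP ->.
Qed.

End SinkPotential.

Lemma resistance_sink_potential (R : realType) n (e : rel 'I_n) i j :
  symmetric e -> connected_graph e ->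
  n%:R * resistance R e i j = sink_potential R e i 0 j + sink_potential R e j 0 i.
Proof.
move=> sym_e con_e; set L := laplacian R e; set w := sink_potential R e.
set d : 'rV[R]_n := delta_mx 0 i - delta_mx 0 j.
have d_sum : \sum_k d 0 k = 0.
  under eq_bigr do rewrite !mxE -[(_ == i)%:R]mulr1 -[(_ == j)%:R]mulr1.
  by rewrite sumrB (sum_eq_delta i (fun _ => 1)) (sum_eq_delta j (fun _ => 1)) subrr.
set v := d *m pinvmx L.
have vL : v *m L = d.
  by apply: laplacian_solvable => //; apply: leq_ltn_trans (ltn_ord i).
have diff_ker : (w j - w i - n%:R *: v) *m L = 0.
  by rewrite mulmxBl -scalemxAl vL mulmxBl !sink_potentialL // sink_currentB subrr.
have := laplacian_kernel_const sym_e con_e i j diff_ker.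
by rewrite /resistance /= -/d -/v !mxE !sink_potential_sink; lra.
Qed.

Lemma kirchhoff_sink_potential (R : realType) n (e : rel 'I_n) :
  symmetric e -> connected_graph e ->
  n%:R * kirchhoff R e = \sum_i \sum_j sink_potential R e i 0 j.
Proof.
move=> sym_e con_e; rewrite /kirchhoff mulr_sumr.
under eq_bigr do rewrite mulr_sumr.
under eq_bigr do under eq_bigr do rewrite resistance_sink_potential //.
exact: sum_ltn_pairs (@sink_potential_sink R n e).
Qed.

Definition perron_set (R : realType) n (e : rel 'I_n) (i : 'I_n) : set R :=
  [set t : R | exists x : 'cV[R]_n,
     [/\ (forall j, 0 <= x j ord0),
         \sum_j (x j ord0) ^+ 2 = 1,
         x i ord0 = 0 &
         t = qform (laplacian R e) x]]%classic.

Lemma inv_perronE (R : realType) n (e : rel 'I_n) i :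
  inv_perron R e i = inf (perron_set e i).
Proof. by []. Qed.

Section InversePerron.
Variables (R : realType) (n : nat) (e : rel 'I_n) (i : 'I_n).
Hypotheses (sym_e : symmetric e) (con_e : connected_graph e) (n_gt1 : (1 < n)%N).
Local Notation L := (laplacian R e).
Local Notation w := (sink_potential R e i).
Local Notation s := (\sum_k w 0 k).
Local Notation q := (\sum_k w 0 k ^+ 2).

Lemma bform_sink_potential_diag : bform L w w = s.
Proof. by rewrite bform_sink_potential // sink_potential_sink mulr0 subr0. Qed.

Lemma perron_set_lbound : lbound (perron_set e i) (1 / s).
Proof.
move=> _ [x [x_ge0 x_norm xi ->]]; rewrite qformE.
have s_pos : 0 < s by apply: sink_potential_sum_gt0.
set u := x^T; have uE k : u 0 k = x k ord0 by rewrite mxE.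
have u_w : bform L u w = \sum_a u 0 a.
  by rewrite bform_sink_potential // uE xi mulr0 subr0.
have sum_u : 1 <= (\sum_a u 0 a) ^+ 2.
  rewrite -x_norm; under eq_bigr do rewrite -uE.
  by apply: sum_sqr_le_sqr_sum => k; rewrite uE.
have w_pos : 0 < bform L w w by rewrite bform_sink_potential_diag.
have := bform_CauchySchwarz u (laplacian_tr R sym_e) (laplacian_bform_ge0 sym_e) w_pos.
rewrite bform_sink_potential_diag u_w => CS.
by rewrite ler_pdivrMr // (le_trans sum_u CS).
Qed.

Lemma sqr_sum_sink_potential : s ^+ 2 <= (n.-1)%:R * q.
Proof.
have drop_sink (F : R -> R) : F 0 = 0 -> \sum_k F (w 0 k) = \sum_(k | k != i) F (w 0 k).
  by move=> F0; rewrite (bigD1 i) //= sink_potential_sink F0 add0r.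
rewrite (drop_sink id) // (drop_sink (fun t => t ^+ 2)) ?expr0n //.
have -> : n.-1 = #|predC1 i| by rewrite cardC1 card_ord.
exact: sqr_sum_le_card_sum_sqr.
Qed.

Lemma sink_potential_sqr_sum_gt0 : 0 < q.
Proof.
rewrite lt_def sumr_ge0 ?andbT => [|k _]; last exact: sqr_ge0.
apply: contraTneq sqr_sum_sink_potential => ->.
by rewrite mulr0 -ltNge exprn_gt0 // sink_potential_sum_gt0.
Qed.

Lemma perron_set_sink_potential : perron_set e i (s / q).
Proof.
have q_pos := sink_potential_sqr_sum_gt0.
pose r := (Num.sqrt q)^-1.
have r2 : r ^+ 2 = q^-1 by rewrite exprVn sqr_sqrtr // ltW.
exists (r *: w^T); split => [j | | |].
- by rewrite !mxE mulr_ge0 ?invr_ge0 ?sqrtr_ge0 ?sink_potential_ge0.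
- under eq_bigr do rewrite !mxE exprMn.
  by rewrite -mulr_sumr r2 mulVf // gt_eqF.
- by rewrite !mxE sink_potential_sink mulr0.
- rewrite qformE linearZ /= trmxK bformZl bformC ?laplacian_tr // bformZl.
  by rewrite bform_sink_potential_diag mulrA -expr2 r2 mulrC.
Qed.

Lemma inv_perron_bounds : 1 / s <= inv_perron R e i <= s / q.
Proof.
rewrite inv_perronE; apply/andP; split.
- apply: lb_le_inf; last exact: perron_set_lbound.
  by exists (s / q); apply: perron_set_sink_potential.
- apply: ge_inf; last exact: perron_set_sink_potential.
  by exists (1 / s); apply: perron_set_lbound.
Qed.

Lemma sink_potential_sum_le_inv_perron : s / (n.-1)%:R <= (inv_perron R e i)^-1.
Proof.
have s_pos : 0 < s by apply: sink_potential_sum_gt0.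
have q_pos := sink_potential_sqr_sum_gt0.
have N_pos : 0 < (n.-1)%:R :> R by rewrite ltr0n -subn1 subn_gt0.
have /andP [lo hi] := inv_perron_bounds.
have a_pos : 0 < inv_perron R e i by apply: lt_le_trans lo; rewrite divr_gt0.
apply: (@le_trans _ _ (s / q)^-1); last by rewrite lef_pV2 ?posrE ?divr_gt0.
rewrite invf_div ler_pdivrMr // mulrAC ler_pdivlMr // -expr2 mulrC.
exact: sqr_sum_sink_potential.
Qed.

End InversePerron.

Theorem corollary4p3 (R : realType) (n : nat) (e : rel 'I_n) :
  simple_graph e -> connected_graph e ->
  kirchhoff R e <= (n.-1)%:R / n%:R * \sum_(i < n) (inv_perron R e i)^-1.
Proof.
move=> [sym_e _] con_e.
have [n_le1 | n_gt1] := leqP n 1.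
  have -> : kirchhoff R e = 0.
    by apply: big1 => i _; apply: big1 => j; have := ltn_ord j; lia.
  by rewrite (_ : n.-1 = 0%N) ?mul0r //; lia.
have n_pos : 0 < n%:R :> R by rewrite ltr0n; lia.
rewrite -(ler_pM2l n_pos) kirchhoff_sink_potential // mulrA mulrCA divff ?gt_eqF //.
rewrite mulr1 mulr_sumr; apply: ler_sum => i _.
have N_pos : 0 < (n.-1)%:R :> R by rewrite ltr0n; lia.
by rewrite -ler_pdivrMl // mulrC sink_potential_sum_le_inv_perron.
Qed.
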